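(* Assume condition (A1) on $(\beta_n)$. Then the additive-loss multiple testing procedure, which sets $\hat d_i=I(v_{in}>\beta_n)$ for $i=1,\ldots,m$ (the optimal decision rule for the loss $L(\mathbf d,\boldsymbol\theta)=c\sum_i d_i(1-r_i)+\sum_i(1-d_i)r_i$, $r_i=I(H_{1i}\text{ true})$, with $\beta_n=c/(1+c)$), is asymptotically consistent, i.e. $\lim_{n\to\infty}\delta(\mathbf d^t\mid\mathbf X_n)=1$ almost surely.
   Context: Data and models: $\mathbf X_n=(X_1,\ldots,X_n)$ are the first $n$ coordinates of a process with true distribution $P$; $p(\mathbf X_n)$ is the true joint density and $f_{\boldsymbol\theta}(\mathbf X_n)$ the postulated density for $\boldsymbol\theta=(\theta_1,\ldots,\theta_M)\in\boldsymbol\Theta=\Theta_1\times\cdots\times\Theta_M$ ($M\le\infty$); $P$ need not belong to the postulated family. $\pi$ is a prior, $\pi(\cdot\mid\mathbf X_n)$ the posterior. For $i=1,\ldots,m$ ($1<m\le M$, $m$ finite) one tests $H_{0i}:\theta_i\in\Theta_{0i}$ vs $H_{1i}:\theta_i\in\Theta_{1i}$ with $\Theta_{0i}\cap\Theta_{1i}=\emptyset$, $\Theta_{0i}\cup\Theta_{1i}=\Theta_i$. Decision configurations $\mathbf d\in\mathbb D=\{0,1\}^m$ ($d_i=1$: reject $H_{0i}$); $\Theta_{d_jj}$ is $\Theta_{0j}$ or $\Theta_{1j}$ according as $d_j=0$ or $1$. KL quantities: $h(\boldsymbol\theta)=\lim_n n^{-1}E_P[\log(p(\mathbf X_n)/f_{\boldsymbol\theta}(\mathbf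 X_n))]$; $h(A)=\pi\text{-}\operatorname{ess\,inf}_A h$, $J(\boldsymbol\theta)=h(\boldsymbol\theta)-h(\boldsymbol\Theta)$, $J(A)=\pi\text{-}\operatorname{ess\,inf}_A J$. With $\boldsymbol\Theta(\mathbf d)=\prod_{i\le m}\Theta_{d_ii}\times\prod_{i>m}\Theta_i$, the true configuration $\mathbf d^t$ is the unique $\mathbf d$ with $J(\boldsymbol\Theta(\mathbf d))=J(\boldsymbol\Theta)$. Let $\Upsilon_{ki}=\{\boldsymbol\theta:\theta_i\in\Theta_{ki}\}$, $J(H_{ki})=J(\Upsilon_{ki})$, $v_{in}=\pi(\Upsilon_{1i}\mid\mathbf X_n)$. Standing assumption (conclusion of Shalizi's (2009) theorem under his conditions (S1)–(S7), assumed throughout): for all $i,k$, $\pi(\Upsilon_{ki})>0$ and $\lim_n n^{-1}\log\pi(\Upsilon_{ki}\mid\mathbf X_n)=-J(\Upsilon_{ki})$ a.s.; $J(H_{1i})>0$ if $d^t_i=0$ and $J(H_{0i})>0$ if $d^t_i=1$. $\delta(\mathbf d\mid\mathbf X_n)=1$ if $\mathbf d$ is the configuration chosen by the procedure, $0$ otherwise. Condition (A1): $\liminf_n\beta_n>0$ and $\limsup_n\beta_n<1$. *)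

From Stdlib Require Import Reals Lra Lia List Bool.
Open Scope R_scope.

(* Abstract "almost surely": a collection [full] of events (predicates on the
   sample space Omega) of probability one.  For any probability space, the
   family of events containing a measurable set of probability one is upward
   closed and closed under finite intersections; these are the only properties
   we assume, so the theorem below holds for every such notion of "a.s.". *)
Definition full_mono {Omega : Type} (full : (Omega -> Prop) -> Prop) : Prop :=
  forall A B : Omega -> Prop, (forall w, A w -> B w) -> full A -> full B.
Definition full_and {Omega : Type} (full : (Omega -> Prop) -> Prop) : Prop :=
  forall A B : Omega -> Prop, full A -> full B -> full (fun w => A w /\ B w).

(* Posterior probability pi(Upsilon_{k i} | X_n) given v_{in} = pi(Upsilon_{1i} | X_n):
   k = true  <-> Upsilon_{1i},  k = false <-> Upsilon_{0i} (its complement). *)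
Definition post (v : nat -> R) (k : bool) (n : nat) : R :=
  if k then v n else 1 - v n.

(* (A1): liminf_n beta_n > 0 and limsup_n beta_n < 1. *)
Definition liminf_pos (beta : nat -> R) : Prop :=
  exists c, 0 < c /\ exists N, forall n, (N <= n)%nat -> c <= beta n.
Definition limsup_lt1 (beta : nat -> R) : Prop :=
  exists c, c < 1 /\ exists N, forall n, (N <= n)%nat -> beta n <= c.
Definition cond_A1 (beta : nat -> R) : Prop := liminf_pos beta /\ limsup_lt1 beta.

Definition dhat (beta : nat -> R) (v : nat -> R) (n : nat) : bool :=
  if Rlt_dec (beta n) (v n) then true else false.

(* delta(d | X_n) = 1 if d (given componentwise by d : nat -> bool on
   indices 0..m-1) is the configuration chosen by the procedure, 0 otherwise. *)
Definition delta_sel (m : nat) (beta : nat -> R) (v : nat -> nat -> R)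
    (d : nat -> bool) (n : nat) : R :=
  if forallb (fun i => Bool.eqb (dhat beta (v i) n) (d i)) (List.seq 0 m)
  then 1 else 0.

(* Under the standing assumption the posterior mass of the false hypothesis
   H_{1-d^t_i, i} decays like exp(-n J) with J > 0, so eventually it drops
   below any fixed level.  Since (A1) keeps beta_n eventually inside some
   [c1, c2] with 0 < c1 <= c2 < 1, each v_{in} ends up on the correct side of
   beta_n; intersecting these m almost-sure events, the chosen configuration
   eventually equals d^t. *)

From Stdlib Require Import Reals.
From Stdlib Require Import Lra Lia List Bool.
Open Scope R_scope.

Definition eventually (P : nat -> Prop) : Prop :=
  exists N, forall n, (N <= n)%nat -> P n.

Lemma eventually_and (P Q : nat -> Prop) :
  eventually P -> eventually Q -> eventually (fun n => P n /\ Q n).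
Proof.
  intros [N1 H1] [N2 H2]. exists (Nat.max N1 N2). intros n Hn.
  split; [apply H1 | apply H2]; lia.
Qed.

Lemma eventually_mono (P Q : nat -> Prop) :
  (forall n, P n -> Q n) -> eventually P -> eventually Q.
Proof. intros HPQ [N HN]. exists N. intros n Hn. apply HPQ, HN, Hn. Qed.

Lemma eventually_forall_lt (k : nat) (P : nat -> nat -> Prop) :
  (forall i, (i < k)%nat -> eventually (P i)) ->
  eventually (fun n => forall i, (i < k)%nat -> P i n).
Proof.
  induction k as [|k IH]; intros HP.
  - exists 0%nat. intros n _ i Hi. lia.
  - apply (eventually_mono (fun n => (forall i, (i < k)%nat -> P i n) /\ P k n)).
    + intros n [Hlt Hk] i Hi.
      destruct (Nat.eq_dec i k) as [->|Hne]; [exact Hk | apply Hlt; lia].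
    + apply eventually_and; [apply IH; intros i Hi|]; apply HP; lia.
Qed.

Lemma Un_cv_eventually_const (u : nat -> R) (l : R) :
  eventually (fun n => u n = l) -> Un_cv u l.
Proof.
  intros [N HN] eps He. exists N. intros n Hn.
  unfold R_dist. rewrite (HN n Hn), Rminus_diag, Rabs_R0. exact He.
Qed.

(* The witness [A0] is needed only for k = 0: [full] is not assumed to
   contain the sure event. *)
Lemma full_forall_lt (Omega : Type) (full : (Omega -> Prop) -> Prop)
    (Hmono : full_mono full) (Hand : full_and full)
    (A0 : Omega -> Prop) (k : nat) (P : nat -> Omega -> Prop) :
  full A0 -> (forall i, (i < k)%nat -> full (P i)) ->
  full (fun w => forall i, (i < k)%nat -> P i w).
Proof.
  intros HA0. induction k as [|k IH]; intros HP.
  - apply (Hmono A0); [intros w _ i Hi; lia | exact HA0].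
  - apply (Hmono (fun w => (forall i, (i < k)%nat -> P i w) /\ P k w)).
    + intros w [Hlt Hk] i Hi.
      destruct (Nat.eq_dec i k) as [->|Hne]; [exact Hk | apply Hlt; lia].
    + apply Hand; [apply IH; intros i Hi|]; apply HP; lia.
Qed.

Lemma ln_rate_neg_eventually_lt (a : nat -> R) (L eps : R) :
  L < 0 -> 0 < eps -> Un_cv (fun n => ln (a n) / INR n) L ->
  eventually (fun n => a n < eps).
Proof.
  intros HL He Hcv.
  destruct (Hcv (-L/2)) as [N1 HN1]; [lra|].
  destruct (INR_unbounded (2 * ln eps / L)) as [N2 HN2].
  exists (Nat.max 1 (Nat.max N1 N2)). intros n Hn.
  assert (Hpos : 0 < INR n) by (apply lt_0_INR; lia).
  assert (HN2n : INR N2 <= INR n) by (apply le_INR; lia).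
  specialize (HN1 n ltac:(lia)). unfold R_dist in HN1.
  apply Rabs_def2 in HN1. destruct HN1 as [Hrate _].
  set (x := ln (a n)) in *.
  (* x / n < L/2 and n > 2 ln eps / L give x < (L/2) n < ln eps. *)
  assert (Hln_small : x < ln eps).
  { assert (Hx : x = (x / INR n) * INR n) by (field; lra).
    assert (Hq : 2 * ln eps / L * L = 2 * ln eps) by (field; lra).
    nra. }
  destruct (Rlt_or_le (a n) eps) as [h|h]; [exact h|].
  exfalso. assert (ln eps <= x); [|lra].
  unfold x. destruct (Req_dec eps (a n)) as [<-|hne]; [lra|].
  left. apply ln_increasing; lra.
Qed.

Lemma dhat_eventually_eq (beta v : nat -> R) (b : bool) (c1 c2 : R) :
  eventually (fun n => c1 <= beta n <= c2) ->
  eventually (fun n => post v (negb b) n < Rmin c1 (1 - c2)) ->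
  eventually (fun n => dhat beta v n = b).
Proof.
  intros Hbeta Hpost.
  generalize (eventually_and _ _ Hbeta Hpost). apply eventually_mono.
  intros n [Hb Hp].
  assert (Hm1 := Rmin_l c1 (1 - c2)). assert (Hm2 := Rmin_r c1 (1 - c2)).
  unfold dhat. destruct (Rlt_dec (beta n) (v n)), b; simpl in Hp; lra.
Qed.

Lemma delta_sel_eq_1 (m : nat) (beta : nat -> R) (v : nat -> nat -> R)
    (d : nat -> bool) (n : nat) :
  (forall i, (i < m)%nat -> dhat beta (v i) n = d i) -> delta_sel m beta v d n = 1.
Proof.
  intros Hd. unfold delta_sel.
  replace (forallb _ _) with true; [reflexivity|]. symmetry.
  apply forallb_forall. intros i Hi. apply in_seq in Hi.
  rewrite Hd by lia. apply eqb_reflx.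
Qed.

Lemma cond_A1_eventually_between (beta : nat -> R) :
  cond_A1 beta ->
  exists c1 c2, 0 < c1 /\ c2 < 1 /\ eventually (fun n => c1 <= beta n <= c2).
Proof.
  intros [[c1 [Hc1 Hlo]] [c2 [Hc2 Hhi]]].
  exists c1, c2. repeat split; [exact Hc1 | exact Hc2 |].
  apply (eventually_and _ _ Hlo Hhi).
Qed.

Theorem corollary1
  (Omega : Type) (full : (Omega -> Prop) -> Prop)
  (Hmono : full_mono full) (Hand : full_and full)
  (m : nat) (Hm : (1 < m)%nat)
  (prior : nat -> bool -> R) (J : nat -> bool -> R) (dt : nat -> bool)
  (v : nat -> Omega -> nat -> R)
  (beta : nat -> R)
  (Hv01 : forall i w n, (i < m)%nat -> 0 <= v i w n <= 1)
  (Hprior : forall i k, (i < m)%nat -> 0 < prior i k)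
  (Hlim : forall i k, (i < m)%nat ->
      full (fun w => Un_cv (fun n => ln (post (v i w) k n) / INR n) (- J i k)))
  (HJ1 : forall i, (i < m)%nat -> dt i = false -> 0 < J i true)
  (HJ0 : forall i, (i < m)%nat -> dt i = true -> 0 < J i false)
  (HA1 : cond_A1 beta) :
  full (fun w => Un_cv (fun n => delta_sel m beta (fun i => v i w) dt n) 1).
Proof.
  destruct (cond_A1_eventually_between beta HA1) as (c1 & c2 & Hc1 & Hc2 & Hbeta).
  assert (HJ : forall i, (i < m)%nat -> 0 < J i (negb (dt i))).
  { intros i Hi. destruct (dt i) eqn:Hd; [apply HJ0 | apply HJ1]; assumption. }
  apply (Hmono (fun w => forall i, (i < m)%nat ->
           Un_cv (fun n => ln (post (v i w) (negb (dt i)) n) / INR n)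
                 (- J i (negb (dt i))))).
  - intros w Hw. apply Un_cv_eventually_const.
    apply (eventually_mono _ _ (delta_sel_eq_1 m beta (fun i => v i w) dt)).
    apply eventually_forall_lt. intros i Hi.
    apply (dhat_eventually_eq _ _ _ c1 c2 Hbeta).
    apply (ln_rate_neg_eventually_lt _ (- J i (negb (dt i)))); [| |exact (Hw i Hi)].
    + specialize (HJ i Hi). lra.
    + apply Rmin_glb_lt; lra.
  - apply (full_forall_lt Omega full Hmono Hand _ m _ (Hlim 0%nat true ltac:(lia))).
    intros i Hi. apply Hlim, Hi.
Qed.
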